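(* Let $X_1,\dots,X_n$ be i.i.d. copies of a non-negative absolutely continuous random variable $X$. Let $\tau_{1|n}(\mathbf X)=\max\{X_1,\dots,X_n\}$ (parallel system), $(\tau_{1|n}(\mathbf X))_t=(\tau_{1|n}(\mathbf X)-t\mid\tau_{1|n}(\mathbf X)>t)$, and $\tau_{1|n}(\mathbf X_t)$ the lifetime of the parallel system built from $n$ independent used components with lifetimes distributed as $(X_i-t\mid X_i>t)$. Then for any fixed $t\ge0$, $\tau_{1|n}(\mathbf X_t)\underset{b}{\prec}(\tau_{1|n}(\mathbf X))_t$.
   Context: All random variables are non-negative and absolutely continuous with support $[0,\infty)$. For a random variable $W$: density $f_W$, cdf $F_W$, reversed hazard rate $\tilde r_W=f_W/F_W$. $U\underset{b}{\prec}V$ means $\tilde r_U(x)/\tilde r_V(x)$ is decreasing (non-increasing) in $x\ge0$. *)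

From HB Require Import structures.
From mathcomp Require Import all_boot all_order all_algebra.
From mathcomp Require Import all_classical all_reals all_analysis.
Set Implicit Arguments. Unset Strict Implicit. Unset Printing Implicit Defensive.
Import Order.TTheory GRing.Theory Num.Theory.
Import numFieldNormedType.Exports.
Local Open Scope classical_set_scope.
Local Open Scope ring_scope.

Section defs.
Context {d : measure_display} {T : measurableType d} {R : realType}.
Variable P : probability T R.

Definition Fcdf (W : T -> R) (x : R) : R := fine (P [set w | W w <= x]).

Definition Fres (W : T -> R) (t x : R) : R :=
  fine (P ([set w | W w - t <= x] `&` [set w | t < W w])) /
  fine (P [set w | t < W w]).

Definition abs_cont (W : T -> R) : Prop :=
  exists f : R -> R, (forall y, 0 <= f y) /\ measurable_fun setT f /\
    forall x, ((Fcdf W x)%:E =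
      \int[lebesgue_measure]_(y in `]-oo, x]) (f y)%:E)%E.

Definition support_nonneg_halfline (W : T -> R) : Prop :=
  (forall x, x < 0 -> Fcdf W x = 0) /\
  (forall a b, 0 <= a -> a < b -> Fcdf W a < Fcdf W b).

Definition mutually_indep n (X : 'I_n -> T -> R) : Prop :=
  forall B : 'I_n -> set R, (forall i, measurable (B i)) ->
    fine (P (\bigcap_(i in setT) (X i @^-1` B i))) =
    \prod_(i < n) fine (P (X i @^-1` B i)).

(* parallel system lifetime tau_{1|n} = max of the component lifetimes
   (components are a.s. non-negative, so max with 0 changes nothing a.s.) *)
Definition parallel n (X : 'I_n -> T -> R) : T -> R :=
  fun w => \big[Num.max/0]_(i < n) X i w.

End defs.

Definition rhr {R : realType} (G : R -> R) (x : R) : R := derive1 G x / G x.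

Definition rhr_ratio_order {R : realType} (GU GV : R -> R) : Prop :=
  forall x y : R, 0 < x -> x <= y ->
    derivable GU x 1 -> derivable GV x 1 ->
    derivable GU y 1 -> derivable GV y 1 ->
    0 < derive1 GU x -> 0 < derive1 GV x -> 0 < derive1 GU y -> 0 < derive1 GV y ->
    rhr GU y / rhr GV y <= rhr GU x / rhr GV x.

(* Let F be the cdf of X, a = F t, u z = F (z + t), and N the number of components.
   For z > 0 the cdf of tau(X_t) is ((u z - a) / (1 - a))^N and that of (tau(X))_t
   is (u z^N - a^N) / (1 - a^N).  Both are polynomials in u, so by the chain rule the
   ratio of reversed hazard rates at z is (u^N - a^N) / ((u - a) u^(N-1)), i.e. the
   geometric sum of (a / u z)^i for i < N, which is non-increasing in z because u is
   non-decreasing.  As u need not be differentiable, the chain rule is replaced by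
   Caratheodory's characterisation of the derivative: both difference quotients
   factor through u z - u x, and u is continuous at x because the first cdf is. *)

From HB Require Import structures.
From mathcomp Require Import all_boot all_order all_algebra.
From mathcomp Require Import all_classical all_reals all_analysis.
From mathcomp Require Import ring.
Import Order.TTheory GRing.Theory Num.Theory.
Import numFieldNormedType.Exports.
Local Open Scope classical_set_scope.
Local Open Scope ring_scope.

Section cdf.
Context {R : realType} {d : measure_display} {T : measurableType d}.
Variable P : probability T R.

Lemma Fcdf_ge0 (W : T -> R) x : 0 <= Fcdf P W x.
Proof. by apply: fine_ge0; exact: measure_ge0. Qed.

Lemma measurable_RV_le (X : {RV P >-> R}) c : measurable [set w | X w <= c].
Proof.
have -> : [set w | X w <= c] = X @^-1` [set` `]-oo, c]].
  by apply/seteqP; split => w /=; rewrite in_itv.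
by apply: measurable_funPTI; exact: measurable_itv.
Qed.

Lemma Fcdf_RV_le1 (X : {RV P >-> R}) x : Fcdf P X x <= 1.
Proof.
have mX := measurable_RV_le X x.
by rewrite -lee_fin fineK ?fin_num_measure// probability_le1.
Qed.

Lemma FresE (W : T -> R) {t x : R} : 0 <= t -> 0 <= x ->
  (forall c, 0 <= c -> measurable [set w | W w <= c]) ->
  Fres P W t x = (Fcdf P W (x + t) - Fcdf P W t) / (1 - Fcdf P W t).
Proof.
move=> t0 x0 mW; have mt := mW t t0; have mxt := mW _ (addr_ge0 x0 t0).
rewrite /Fres /Fcdf.
have -> : [set w | t < W w] = ~` [set w | W w <= t].
  by apply/seteqP; split => w /=; rewrite ltNge => /negP.
have -> : [set w | W w - t <= x] `&` ~` [set w | W w <= t] =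
          [set w | W w <= x + t] `\` [set w | W w <= t].
  by apply/seteqP; split => w /= []; rewrite lerBlDr.
have le_t_xt : [set w | W w <= t] `<=` [set w | W w <= x + t].
  by move=> w /= /le_trans; apply; rewrite lerDr.
rewrite probability_setC// measureD// ?setIidr//; last first.
  by rewrite (le_lt_trans (probability_le1 P mxt)) ?ltry.
by rewrite !fineB ?fin_num_measure.
Qed.

Lemma parallel_leE n (Xs : 'I_n -> T -> R) c : 0 <= c ->
  [set w | parallel Xs w <= c] = \bigcap_(i in setT) (Xs i @^-1` [set` `]-oo, c]]).
Proof.
move=> c0; apply/seteqP; split => w /=.
  by move=> /bigmax_leP [_ Xc] i _ /=; rewrite in_itv /= Xc.
move=> Xc; apply/bigmax_leP; split => // i _.
by have := Xc i I; rewrite /= in_itv.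
Qed.

Lemma measurable_parallel_le {n} (Xs : 'I_n -> {RV P >-> R}) c : 0 <= c ->
  measurable [set w | parallel (fun i => (Xs i : T -> R)) w <= c].
Proof.
move=> c0; rewrite parallel_leE//.
apply: fin_bigcap_measurable; [exact: finite_finset | move=> i _].
by apply: measurable_funPTI; exact: measurable_itv.
Qed.

Lemma Fcdf_parallel_iid {n} {Xs : 'I_n -> {RV P >-> R}} {G : R -> R} :
  mutually_indep P (fun i => (Xs i : T -> R)) -> (forall i, Fcdf P (Xs i) = G) ->
  forall c, 0 <= c -> Fcdf P (parallel (fun i => (Xs i : T -> R))) c = G c ^+ n.
Proof.
move=> indep cdfXs c c0; rewrite /Fcdf parallel_leE// indep; last first.
  by move=> i; exact: measurable_itv.
rewrite -[n in _ ^+ n]card_ord -prodr_const; apply: eq_bigr => i _.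
by rewrite -(cdfXs i).
Qed.

End cdf.

Section factor_derivative.
Context {R : realType}.
Implicit Types (f g u s r : R -> R) (x c : R).

Lemma continuous_dnbhs_eq f g x : {for x, continuous f} -> {for x, continuous g} ->
  (\forall z \near x^', f z = g z) -> f x = g x.
Proof.
move=> cf cg fg.
have fx : f @ x^' --> f x by apply: cvg_within_filter; exact: cf.
have gx : g @ x^' --> g x by apply: cvg_within_filter; exact: cg.
exact: cvg_unique (cvg_trans (near_eq_cvg fg) fx) gx.
Qed.

Lemma continuous_of_factor {f u s x} c : 0 < c -> {for x, continuous f} ->
  (\forall z \near x, f z - f x = (u z - u x) * s z) ->
  (\forall z \near x, c <= s z) -> {for x, continuous u}.
Proof.
move=> c0 cf fE sc; apply/cvgrPdist_le => e e0.
have fe := (cvgrPdist_le _ _).1 cf _ (mulr_gt0 e0 c0).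
near=> z; rewrite -(ler_pM2r c0); apply: le_trans (_ : `|f x - f z| <= _).
- have [fEz scz] : f z - f x = (u z - u x) * s z /\ c <= s z by split; near: z.
  rewrite distrC [`|f x - f z|]distrC fEz normrM (ger0_norm (le_trans (ltW c0) scz)).
  exact: ler_wpM2l.
- by near: z; exact: fe.
Unshelve. all: by end_near.
Qed.

Lemma derive1_factor {f g u s r x} : derivable f x 1 -> derivable g x 1 ->
  {for x, continuous s} -> {for x, continuous r} ->
  (\forall z \near x, f z - f x = (u z - u x) * s z) ->
  (\forall z \near x, g z - g x = (u z - u x) * r z) ->
  derive1 g x * s x = derive1 f x * r x.
Proof.
move=> /derivableP/is_derive1_caratheodory[hf [hfE hfc hfx]].
move=> /derivableP/is_derive1_caratheodory[hg [hgE hgc hgx]] sc rc fE gE.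
rewrite !derive1E -hfx -hgx.
apply: (@continuous_dnbhs_eq (fun z => hg z * s z) (fun z => hf z * r z)).
- exact: cvgM.
- exact: cvgM.
near=> z.
have zx : z - x != 0 by rewrite subr_eq0; near: z; exact: nbhs_dnbhs_neq.
have [fEz gEz] : f z - f x = (u z - u x) * s z /\ g z - g x = (u z - u x) * r z.
  by split; near: z; apply: cvg_within.
apply: (mulIf zx); rewrite mulrAC -hgE gEz [RHS]mulrAC -hfE fEz; ring.
Unshelve. all: by end_near.
Qed.

End factor_derivative.

Section power_difference.
Context {R : realType}.

Lemma continuous_sum_pow (w : R) n :
  continuous (fun v : R => \sum_(i < n.+1) v ^+ (n - i) * w ^+ i).
Proof.
pose p : {poly R} := \sum_(i < n.+1) (w ^+ i) *: 'X^(n - i).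
have -> : (fun v => \sum_(i < n.+1) v ^+ (n - i) * w ^+ i) = horner p.
  apply/funext => v; rewrite horner_sum; apply: eq_bigr => i _.
  by rewrite hornerZ hornerXn mulrC.
exact: continuous_horner.
Qed.

Lemma sum_pow_diag (v : R) n : \sum_(i < n.+1) v ^+ (n - i) * v ^+ i = n.+1%:R * v ^+ n.
Proof.
rewrite (eq_bigr (fun=> v ^+ n)) ?sumr_const ?card_ord ?mulr_natl// => i _.
by rewrite -exprD subnK// -ltnS.
Qed.

Lemma sum_pow_ge_last (v w : R) n : 0 <= v -> 0 <= w ->
  w ^+ n <= \sum_(i < n.+1) v ^+ (n - i) * w ^+ i.
Proof.
move=> v0 w0; rewrite big_ord_recr /= subnn expr0 mul1r lerDr.
by apply: sumr_ge0 => i _; rewrite mulr_ge0// exprn_ge0.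
Qed.

Lemma geometric_sumE (a u : R) n : u != 0 -> u != a ->
  \sum_(i < n.+1) (a / u) ^+ i = (u ^+ n.+1 - a ^+ n.+1) / ((u - a) * u ^+ n).
Proof.
move=> u0 ua; have au1 : a / u - 1 != 0.
  by rewrite -[1](divff u0) -mulrBl mulf_neq0 ?invr_eq0// subr_eq0 eq_sym.
apply: (mulfI au1); rewrite -subrX1 expr_div_n !exprS.
by field; rewrite u0 expf_neq0 // subr_eq0 ua.
Qed.

End power_difference.

Section rhr_ratio_power.
Context {R : realType}.
Context {GU GV u : R -> R} {a m k : R} {n : nat}.
Hypotheses (m_gt0 : 0 < m) (k_gt0 : 0 < k) (a_ge0 : 0 <= a).
Hypothesis a_lt_u : forall z, 0 < z -> a < u z.
Hypothesis u_homo : forall x y, 0 < x -> x <= y -> u x <= u y.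
Hypothesis GUE : forall z, 0 < z -> GU z = m * (u z - a) ^+ n.+1.
Hypothesis GVE : forall z, 0 < z -> GV z = k * (u z ^+ n.+1 - a ^+ n.+1).

Lemma rhr_ratio_powE x : 0 < x ->
  derivable GU x 1 -> derivable GV x 1 -> derive1 GU x != 0 ->
  rhr GU x / rhr GV x = \sum_(i < n.+1) (a / u x) ^+ i.
Proof.
move=> x0 dU dV DU0; have ax := a_lt_u x x0; have ux0 := le_lt_trans a_ge0 ax.
pose q (v w : R) := \sum_(i < n.+1) v ^+ (n - i) * w ^+ i.
have GUq : \forall z \near x, GU z - GU x = (u z - u x) * (m * q (u z - a) (u x - a)).
  near=> z; have z0 : 0 < z by near: z; exact: lt_nbhsr x0.
  rewrite !GUE// -mulrBr subrXX /=.
  by rewrite [in RHS]mulrCA opprB addrA subrK.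
have GVq : \forall z \near x, GV z - GV x = (u z - u x) * (k * q (u z) (u x)).
  near=> z; have z0 : 0 < z by near: z; exact: lt_nbhsr x0.
  by rewrite !GVE// -mulrBr opprB addrA subrK subrXX /= mulrCA.
have cu : {for x, continuous u}.
  apply: (continuous_of_factor (m * (u x - a) ^+ n) _ _ GUq).
  - by rewrite mulr_gt0// exprn_gt0// subr_gt0.
  - exact/differentiable_continuous/derivable1_diffP.
  near=> z; rewrite ler_pM2l//; apply: sum_pow_ge_last; rewrite subr_ge0 ltW//.
  by apply: a_lt_u; near: z; exact: lt_nbhsr x0.
have cS : {for x, continuous (fun z => m * q (u z - a) (u x - a))}.
  apply: cvgM; first exact: cvg_cst.
  exact: continuous_comp (cvgB cu (cvg_cst a)) (continuous_sum_pow _ _ _).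
have cA : {for x, continuous (fun z => k * q (u z) (u x))}.
  apply: cvgM; first exact: cvg_cst.
  exact: continuous_comp cu (continuous_sum_pow _ _ _).
have := derive1_factor dU dV cS cA GUq GVq.
rewrite /q !sum_pow_diag => DVE.
have DVE' : derive1 GV x =
    derive1 GU x * (k * (n.+1%:R * u x ^+ n)) / (m * (n.+1%:R * (u x - a) ^+ n)).
  by rewrite -DVE mulfK// !mulf_neq0 ?pnatr_eq0 ?gt_eqF// exprn_gt0// subr_gt0.
have uNaN : u x ^+ n.+1 - a ^+ n.+1 != 0.
  by rewrite subr_eq0 gt_eqF// ltrXn2r// ltW.
have N0 : 1 + n%:R != 0 :> R by rewrite addrC natr1 pnatr_eq0.
have U0 : u x ^+ n != 0 by rewrite expf_neq0 ?gt_eqF.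
have S0 : (u x - a) ^+ n != 0 by rewrite expf_neq0 ?gt_eqF ?subr_gt0.
rewrite /rhr geometric_sumE ?gt_eqF// !GUE// !GVE// DVE'.
(* [field] only sees powers with a symbolic exponent as atoms. *)
move: uNaN U0 S0; rewrite !exprS.
move: (u x ^+ n) ((u x - a) ^+ n) (a ^+ n) => U S A uNaN U0 S0.
by field; rewrite N0 uNaN DU0 U0 S0 !gt_eqF// subr_gt0.
Unshelve. all: by end_near.
Qed.

Lemma rhr_ratio_order_pow : rhr_ratio_order GU GV.
Proof.
move=> x y x0 xy dUx dVx dUy dVy DUx _ DUy _; have y0 := lt_le_trans x0 xy.
rewrite !rhr_ratio_powE ?gt_eqF//.
have ux0 := le_lt_trans a_ge0 (a_lt_u x x0); have uy0 := le_lt_trans a_ge0 (a_lt_u y y0).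
apply: ler_sum => i _; apply: lerXn2r; rewrite ?nnegrE.
- exact: divr_ge0 a_ge0 (ltW uy0).
- exact: divr_ge0 a_ge0 (ltW ux0).
- by apply: ler_wpM2l => //; rewrite lef_pV2 ?posrE ?u_homo.
Qed.

End rhr_ratio_power.

Theorem corollary5p2 (R : realType)
  (d : measure_display) (T : measurableType d) (P : probability T R)
  (d' : measure_display) (T' : measurableType d') (Q : probability T' R)
  (n : nat) (hn : (0 < n)%N)
  (X : {RV P >-> R}) (Xs : 'I_n -> {RV P >-> R})
  (Ys : 'I_n -> {RV Q >-> R}) (t : R) (ht : 0 <= t) :
  abs_cont P X ->
  support_nonneg_halfline P X ->
  (* X_1, ..., X_n are i.i.d. copies of X *)
  mutually_indep P (fun i => (Xs i : T -> R)) ->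
  (forall i, Fcdf P (Xs i) = Fcdf P X) ->
  (* n independent used components, distributed as (X_i - t | X_i > t) *)
  mutually_indep Q (fun i => (Ys i : T' -> R)) ->
  (forall i, Fcdf Q (Ys i) = Fres P X t) ->
  rhr_ratio_order
    (Fcdf Q (parallel (fun i => (Ys i : T' -> R))))         (* tau(X_t) *)
    (Fres P (parallel (fun i => (Xs i : T -> R))) t).       (* (tau(X))_t *)
Proof.
case: n hn Xs Ys => [//|n] _ Xs Ys _ [_ F_incr] indepX cdfX indepY cdfY.
set F := Fcdf P X; set a := F t; pose u z := F (z + t).
have a_ge0 : 0 <= a := Fcdf_ge0 P X t.
have a_lt1 : a < 1.
  by apply: lt_le_trans (Fcdf_RV_le1 P X (t + 1)); apply: F_incr; rewrite ?ltrDl.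
have a_lt_u z : 0 < z -> a < u z by move=> z0; apply: F_incr; rewrite ?ltrDr.
have u_homo x y : 0 < x -> x <= y -> u x <= u y.
  move=> x0; rewrite le_eqVlt => /orP[/eqP-> //|xy].
  by apply/ltW; apply: F_incr; rewrite ?ltrD2r// addr_ge0// ltW.
have m_gt0 : 0 < ((1 - a) ^+ n.+1)^-1 by rewrite invr_gt0 exprn_gt0 ?subr_gt0.
have k_gt0 : 0 < (1 - a ^+ n.+1)^-1 by rewrite invr_gt0 subr_gt0 expr_lt1.
apply: (rhr_ratio_order_pow (n := n) m_gt0 k_gt0 a_ge0 a_lt_u u_homo) => z z0.
- rewrite (Fcdf_parallel_iid _ indepY cdfY) ?ltW//.
  rewrite (FresE P X ht (ltW z0) (fun c _ => measurable_RV_le P X c)).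
  by rewrite exprMn exprVn mulrC.
- have zt0 : 0 <= z + t := addr_ge0 (ltW z0) ht.
  rewrite (FresE P _ ht (ltW z0) (measurable_parallel_le P Xs)).
  by rewrite !(Fcdf_parallel_iid _ indepX cdfX)// mulrC.
Qed.
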